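(* Let $\mathcal G_c$ be the colored union graph of a switched system $(A_k,B_k)_{k=1}^N$ and $X_s\subseteq X$. (1) If $\mathcal G_c$ contains a generalized stem that covers $X_s$, then there is a generalized cactus walking whose head is $X_s$. (2) If $\mathcal G_c$ contains a generalized bud that covers $X_s$, then there is a generalized cactus walking whose head is $X_s$, and the length of the shortest walk in it can be arbitrarily large (i.e., for every $M\in\mathbb N$ there is such a generalized cactus walking all of whose walks have length at least $M$).
   Context: Setting: subsystems $(A_k,B_k)$, $A_k\in\mathbb{R}^{n\times n}$ (or structured), $B_k$ of size $n\times m_k$, $k\in[N]=\{1,\dots,N\}$; $A_k(p,j)$, $B_l(q,j)$ denote entries. Colored union graph $\mathcal G_c$: vertices $X=\{x_1,\dots,x_n\}$ and $U=\bigcup_kU_k$, $U_k=\{u^k_1,\dots,u^k_{m_k}\}$; for each $k$ and each nonzero $A_k(j,q)$ a state edge $(x_q,x_j)$ with color index $k$ (parallel edges of different colors allowed); for each nonzero $B_k(j,q)$ an input edge $(u^k_q,x_j)$ with color index $k$. A state vertex is input-reachable if some path from a vertex of $U$ reaches it. Edges are S-disjoint if their heads are all distinct and edges having the same tail have different color indices. A cycle is a closed walk whose only repeated vertex is its start/end (self-loops allowed). A subgraph covers $X_s$ if its vertex set contains $X_s$. Generalized stem: a subgraph $(V_s,E_s)$ of $\mathcal G_c$ with exactly one input vertex in $V_s$ and no cycle, in which each state vertex of $V_s$ has exactly one ingoing edge in $E_s$, and whose edges are S-disjoint. Generalized bud: a subgraph $(V_s,E_s)$ with no input vertex and exactly one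 cycle, every state vertex of which is input-reachable in $\mathcal G_c$, each state vertex of $V_s$ having exactly one ingoing edge in $E_s$, and whose edges are S-disjoint. Multi-layer dynamic graph $\hat{\mathcal G}_{\bar l}$: layers $0,\dots,\bar l$. Layer 0: $\hat X_0=\{x^{00}_{p0}:p\in[n]\}$, $\hat U_0=\{u^{00}_{k,j0}: j\in[N],k\in[m_j]\}$, edges $(u^{00}_{k,j0},x^{00}_{q0})$ when $B_j(q,k)\ne0$. Layer $i\ge1$: $\hat X_i=\{x^{kt}_{ji}: j\in[n],k\in[N],t\in[N^{i-1}]\}$, $\hat U_i=\{u^{kt}_{j,li}: k,l\in[N],j\in[m_l],t\in[N^{i-1}]\}$, edges $(u^{kt}_{j,li},x^{kt}_{qi})$ when $B_l(q,j)\ne0$. Edges $(x^{k1}_{j1},x^{00}_{p0})$ when $A_k(p,j)\ne0$; for $i\ge 2$, edges $(x^{kt}_{ji},x^{k't'}_{p,i-1})$ when $A_k(p,j)\ne0$, for $k,k'\in[N]$, $t'\in[N^{i-2}]$, $t=(k'-1)N^{i-2}+t'$. An input-state walk is a walk in $\mathcal G_c$ from a vertex of $U$ to a vertex of $X$. For such a walk $p$ of length $k$ with edge colors $i_1,\dots,i_k$ passing through $u^{i_1}_{j_1},x_{j_2},\dots,x_{j_{k+1}}$, its MDG-path $\hat p$ is the unique path in $\hat{\mathcal G}_{\bar l}$ ($\bar l\ge k$) of the form $(u^{i_2,\bullet}_{j_1,i_1,k-1},x^{i_2,\bullet}_{j_2,k-1},x^{i_3,\bullet}_{j_3,k-2},\dots,x^{i_k,1}_{j_k,1},x^{00}_{j_{k+1},0})$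 with copy indices $\bullet$ forced by the edge structure (for $k=1$: $(u^{00}_{j_1,i_10},x^{00}_{j_2,0})$). A collection of input-state walks $\{p_1,\dots,p_k\}$ is a generalized cactus walking if their MDG-paths $\hat p_1,\dots,\hat p_k$ are pairwise vertex-disjoint in $\hat{\mathcal G}_{\bar l}$ with $\bar l\ge\max_i|p_i|$; its head is the set of heads of its walks. *)

From HB Require Import structures.
From mathcomp Require Import all_boot all_order all_algebra.
From Stdlib Require List.
Set Implicit Arguments. Unset Strict Implicit. Unset Printing Implicit Defensive.
Import GRing.Theory.
Local Open Scope ring_scope.

(* Switched system: subsystems k : 'I_N (paper's k = 1..N), states 'I_n,
   A k : 'M_n, B k : 'M_(n, m k).  Only the zero pattern matters. *)
Section ColoredUnionGraph.
Variables (R : nzRingType) (n N : nat) (m : 'I_N -> nat).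
Variables (A : 'I_N -> 'M[R]_n) (B : forall k : 'I_N, 'M[R]_(n, m k)).

(* Vertices of G_c: state x_j, or input u^k_q (input q of subsystem k). *)
Inductive vertex := VX of 'I_n | VU (k : 'I_N) of 'I_(m k).

(* Candidate edges of G_c, carrying their color index k:
   SE k q j = state edge (x_q, x_j) of color k;
   IE k q j = input edge (u^k_q, x_j) of color k. *)
Inductive cedge := SE of 'I_N & 'I_n & 'I_n | IE (k : 'I_N) of 'I_(m k) & 'I_n.

Definition etail (e : cedge) : vertex :=
  match e with SE _ q _ => VX q | IE k q _ => VU q end.
Definition ehead (e : cedge) : 'I_n :=
  match e with SE _ _ j => j | IE _ _ j => j end.
Definition ecolor (e : cedge) : 'I_N :=
  match e with SE k _ _ => k | IE k _ _ => k end.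

Definition is_edge (e : cedge) : Prop :=
  match e with
  | SE k q j => A k j q != 0
  | IE k q j => B k j q != 0
  end.

Definition subgraph (Vs : vertex -> Prop) (Es : cedge -> Prop) : Prop :=
  forall e, Es e -> [/\ is_edge e, Vs (etail e) & Vs (VX (ehead e))].

Definition S_disjoint (Es : cedge -> Prop) : Prop :=
  forall e e', Es e -> Es e' -> e <> e' ->
    ehead e <> ehead e' /\ (etail e = etail e' -> ecolor e <> ecolor e').

Definition one_ingoing (Vs : vertex -> Prop) (Es : cedge -> Prop) : Prop :=
  forall x, Vs (VX x) -> exists! e, Es e /\ ehead e = x.

Definition is_cycle (Es : cedge -> Prop) (c : seq cedge) : Prop :=
  match c with
  | [::] => False
  | e0 :: _ =>
      [/\ forall e, List.In e c -> Es e,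
          forall i, (i < size c)%N ->
            VX (ehead (nth e0 c i)) = etail (nth e0 c (i.+1 %% size c)) &
          List.NoDup (map etail c)]
  end.

(* Walk u^l_q -> x_{first} -> x_{j3} -> ... ; the first edge is the input edge
   of color l, each step (c, y) is a state edge of color c to x_y. *)
Record iswalk := ISWalk {
  w_sub : 'I_N; w_inp : 'I_(m w_sub); w_first : 'I_n;
  w_steps : seq ('I_N * 'I_n) }.

Fixpoint state_chain (x : 'I_n) (s : seq ('I_N * 'I_n)) : Prop :=
  match s with
  | [::] => True
  | (c, y) :: s' => A c y x != 0 /\ state_chain y s'
  end.

Definition valid_walk (p : iswalk) : Prop :=
  B (w_sub p) (w_first p) (w_inp p) != 0 /\ state_chain (w_first p) (w_steps p).

Definition wlength (p : iswalk) : nat := (size (w_steps p)).+1.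
Definition whead (p : iswalk) : 'I_n := last (w_first p) (map snd (w_steps p)).

Definition input_reachable (x : 'I_n) : Prop :=
  exists p, valid_walk p /\ whead p = x.

Definition gen_stem (Vs : vertex -> Prop) (Es : cedge -> Prop) : Prop :=
  [/\ subgraph Vs Es,
      (exists k (q : 'I_(m k)), Vs (VU q) /\
        forall k' (q' : 'I_(m k')), Vs (VU q') -> VU q' = VU q),
      (forall c, ~ is_cycle Es c),
      one_ingoing Vs Es &
      S_disjoint Es].

Definition gen_bud (Vs : vertex -> Prop) (Es : cedge -> Prop) : Prop :=
  subgraph Vs Es /\
  [/\ (forall k (q : 'I_(m k)), ~ Vs (VU q)),
      (exists c, is_cycle Es c /\
        forall c', is_cycle Es c' -> forall e, List.In e c' <-> List.In e c),
      (forall x, Vs (VX x) -> input_reachable x),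
      one_ingoing Vs Es &
      S_disjoint Es].

Definition covers (Vs : vertex -> Prop) (Xs : {set 'I_n}) : Prop :=
  forall x, x \in Xs -> Vs (VX x).

(* Encoding of the MDG vertices: the copy index (k,t) of a layer-i vertex
   (i >= 1) is encoded by the color sequence k :: s, where s (of length i-1)
   is the sequence encoded by t via t = (k'-1)N^{i-2} + t' recursively; a
   layer-0 vertex has the empty sequence.  The layer is the length.
     MX j s      ~ x^{kt}_{j,i}    (x^{00}_{j0} if s = [::])
     MU l j s    ~ u^{kt}_{j,l,i}  (input j of subsystem l; u^{00}_{j,l0}) *)
Inductive mdg_vertex := MX of 'I_n & seq 'I_N | MU (l : 'I_N) of 'I_(m l) & seq 'I_N.

(* Edges of the MDG in this encoding (layer bound lbar ignored since the
   relevant paths live in layers <= max walk length):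
   MX j (k :: s) -> MX p s  iff A_k(p,j) != 0 ;  MU l j s -> MX q s iff B_l(q,j) != 0. *)
Definition mdg_edge (v w : mdg_vertex) : Prop :=
  match v, w with
  | MX j (k :: s), MX p s' => s = s' /\ A k p j != 0
  | MU l j s, MX q s' => s = s' /\ B l q j != 0
  | _, _ => False
  end.

(* MDG-path of an input-state walk:
   (u^{i2,.}_{j1,i1,k-1}, x^{i2,.}_{j2,k-1}, ..., x^{ik,1}_{jk,1}, x^{00}_{j(k+1),0}) *)
Fixpoint mdg_states (x : 'I_n) (s : seq ('I_N * 'I_n)) : seq mdg_vertex :=
  match s with
  | [::] => [:: MX x [::]]
  | (c, y) :: s' => MX x (c :: map fst s') :: mdg_states y s'
  end.

Definition mdg_path (p : iswalk) : seq mdg_vertex :=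
  MU (w_inp p) (map fst (w_steps p)) :: mdg_states (w_first p) (w_steps p).

Definition vertex_disjoint (P Q : seq mdg_vertex) : Prop :=
  forall v, ~ (List.In v P /\ List.In v Q).

Definition gen_cactus_walking (ps : seq iswalk) : Prop :=
  (forall p, List.In p ps -> valid_walk p) /\
  forall ps1 p ps2 p' ps3, ps = ps1 ++ p :: ps2 ++ p' :: ps3 ->
    vertex_disjoint (mdg_path p) (mdg_path p').

Definition cw_head_is (ps : seq iswalk) (Xs : {set 'I_n}) : Prop :=
  forall x, x \in Xs <-> exists2 p, List.In p ps & whead p = x.

End ColoredUnionGraph.

From HB Require Import structures.
From mathcomp Require Import all_boot all_order all_algebra.
From Stdlib Require List.
From mathcomp Require Import zify.
Set Implicit Arguments. Unset Strict Implicit. Unset Printing Implicit Defensive.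

(* S-disjointness forbids two edges with the same tail and color, so a walk inside the
   subgraph is determined by its start and its color sequence.  The MDG-vertex
   x^{k,t}_{j,i} of an MDG-path records the state x_j and the colors of the i remaining
   steps; hence two such walks through a common MDG-vertex share a suffix, and so a head.

   Stem: following the unique ingoing edges backwards from a covered state reaches the
   input within n steps, since otherwise a state repeats and the stem has a cycle.

   Bud: n backward steps always land on the unique cycle.  Take an input walk p0 that
   enters the cycle for the first time at its end, and reach a target x from it by
   winding around the cycle a number of times growing fast in x, then moving along the
   bud.  Walks to distinct targets then have lengths differing by more than |p0|, so a
   common MDG-vertex lies in the bud parts of both walks: if it lay inside p0, the
   longer walk would reach its state by at least n bud steps, putting that state on the
   cycle before p0 enters it.  Determinism then forces equal heads, and the winding
   number makes every walk as long as desired. *)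

Lemma cat_eq_cat (T : Type) (s1 s2 t1 t2 : seq T) : s1 ++ s2 = t1 ++ t2 ->
  (exists q, t1 = s1 ++ q /\ s2 = q ++ t2) \/
  (exists q, [/\ 0 < size q, s1 = t1 ++ q & t2 = q ++ s2]).
Proof.
elim: s1 t1 => [|a s1 IH] [|b t1] //= E.
- by left; exists [::].
- by left; exists (b :: t1).
- by right; exists (a :: s1).
- case: E => -> /IH [[q [-> ->]]|[q [q_gt0 -> ->]]].
  + by left; exists q.
  + by right; exists q.
Qed.

Lemma mem_map_In (T : Type) (U : eqType) (f : T -> U) s u :
  u \in map f s <-> exists2 t, List.In t s & f t = u.
Proof.
elim: s => [|a s IH] /=; first by split=> // [[]].
rewrite in_cons; split.
- case/orP=> [/eqP->|s_u]; first by exists a; [left|].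
  by have [t s_t <-] := IH.1 s_u; exists t; [right|].
- case=> t [<-|s_t] ft_u; first by rewrite ft_u eqxx.
  by rewrite (proj2 IH) ?orbT //; exists t.
Qed.

Lemma split_map_mem (T : Type) (U : eqType) (f : T -> U) s u :
  u \in map f s -> exists s1 a s2, s = s1 ++ a :: s2 /\ f a = u.
Proof.
elim: s => [|b s IH] //=; rewrite inE; case/orP=> [/eqP ->|/IH [s1 [a [s2 [-> fa]]]]].
- by exists [::], b, s.
- by exists (b :: s1), a, s2.
Qed.

Lemma NoDup_map_uniq (T : eqType) (U : Type) (f : T -> U) s :
  injective f -> uniq s -> List.NoDup (map f s).
Proof.
move=> f_inj; elim: s => [|a s IH] /=; first by constructor.
case/andP=> s'a s_uniq; constructor; last exact: IH.
case/List.in_map_iff=> b [/f_inj b_a s_b]; move/negP: s'a; apply; rewrite -b_a.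
by rewrite -[s]map_id; apply/(mem_map_In id s b).2; exists b.
Qed.

Lemma exists_seq_preimage (T : Type) (U : eqType) (f : T -> U) (P : T -> Prop) s :
  (forall u, u \in s -> exists2 t, P t & f t = u) ->
  exists ts, map f ts = s /\ forall t, List.In t ts -> P t.
Proof.
elim: s => [|u s IH] fP; first by exists [::].
have [|ts [<- Pts]] := IH; first by move=> v s_v; apply: fP; rewrite inE s_v orbT.
have [t Pt <-] := fP u (mem_head _ _).
by exists (t :: ts); split=> // t' [<-|/Pts].
Qed.

Lemma nth_belast_closed (T : Type) (x0 v : T) h i : last v h = v -> i < size h ->
  nth x0 (belast v h) (i.+1 %% size h) = nth x0 h i.
Proof.
case: h => [|a h] //= closed; rewrite ltnS => i_le.
case: (ltngtP i (size h)) i_le => // [i_lt|->] _.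
- by rewrite modn_small ?ltnS //= [a :: h]lastI nth_rcons size_belast i_lt.
- by rewrite modnn /= -closed -[size h]/((size (a :: h)).-1) nth_last.
Qed.

Lemma last_in_belast (T : eqType) x (s1 s2 : seq T) : 0 < size s2 ->
  last x s1 \in belast x (s1 ++ s2).
Proof. by case: s2 => // y s2 _; rewrite belast_cat mem_cat /= mem_head orbT. Qed.

Lemma ord_seq_not_uniq n (s : seq 'I_n) : n < size s -> ~~ uniq s.
Proof.
move=> n_lt; apply/negP=> s_uniq.
have sub_enum : {subset s <= enum 'I_n} by move=> x; rewrite mem_enum.
by have := uniq_leq_size s_uniq sub_enum; rewrite size_enum_ord leqNgt n_lt.
Qed.

Lemma not_uniq_closed_segment (T : Type) (U : eqType) (f : T -> U) x s :
  ~~ uniq (x :: map f s) ->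
  exists s1 s2 s3 y, [/\ s = s1 ++ s2 ++ s3, last x (map f s1) = y, 0 < size s2,
    last y (map f s2) = y & uniq (belast y (map f s2))].
Proof.
elim: s x => [|a s IH] x //.
case s_uniq: (uniq (map f (a :: s))); last first.
  move=> _; have [s1 [s2 [s3 [y [-> ? ? ? ?]]]]] := IH (f a) (negbT s_uniq).
  by exists (a :: s1), s2, s3, y.
rewrite cons_uniq s_uniq andbT negbK => /split_map_mem [s1 [b [s2 [s_eq fb]]]].
exists [::], (rcons s1 b), s2, x; rewrite s_eq cat_rcons size_rcons.
move: s_uniq; rewrite s_eq map_cat cat_uniq /= fb => /and3P [s1_uniq /norP [x's1 _] _].
by rewrite map_rcons last_rcons belast_rcons /= s1_uniq x's1.
Qed.

Section EdgeChains.
Variables (n N : nat) (m : 'I_N -> nat) (Es : cedge n m -> Prop).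

Fixpoint chain_in (x : 'I_n) (s : seq ('I_N * 'I_n)) : Prop :=
  if s is (c, y) :: s' then Es (SE m c x y) /\ chain_in y s' else True.

Fixpoint chain_edges (x : 'I_n) (s : seq ('I_N * 'I_n)) : seq (cedge n m) :=
  if s is (c, y) :: s' then SE m c x y :: chain_edges y s' else [::].

Lemma chain_in_cat x s1 s2 :
  chain_in x (s1 ++ s2) <-> chain_in x s1 /\ chain_in (last x (map snd s1)) s2.
Proof. by elim: s1 x => [|[c y] s1 IH] x /=; [tauto | rewrite IH; tauto]. Qed.

Lemma chain_inP x s : chain_in x s <-> forall e, List.In e (chain_edges x s) -> Es e.
Proof.
elim: s x => [|[c y] s IH] x //=; rewrite IH; split.
- by case=> Ee Es_s e [<-|/Es_s].
- by move=> Es_s; split=> [|e s_e]; apply: Es_s; [left|right].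
Qed.

Lemma chain_edges_heads x s : [seq ehead e | e <- chain_edges x s] = map snd s.
Proof. by elim: s x => [|[c y] s IH] x //=; rewrite IH. Qed.

Lemma chain_edges_tails x s :
  [seq etail e | e <- chain_edges x s] = map (VX m) (belast x (map snd s)).
Proof. by elim: s x => [|[c y] s IH] x //=; rewrite IH. Qed.

Lemma chain_edges_tail_mem x s e : List.In e (chain_edges x s) ->
  exists2 y, y \in belast x (map snd s) & etail e = VX m y.
Proof.
elim: s x => [|[c y] s IH] x //= [<-|/IH [z s_z ->]]; first by exists x; rewrite ?mem_head.
by exists z; rewrite // in_cons s_z orbT.
Qed.

Lemma chain_edgesK (c : seq (cedge n m)) x :
  [seq etail e | e <- c] = map (VX m) (belast x [seq ehead e | e <- c]) ->
  c = chain_edges x [seq (ecolor e, ehead e) | e <- c].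
Proof.
elim: c x => [|[k q y|k q y] c IH] x //= [tail_e tail_c].
by rewrite -(IH y tail_c); case: tail_e => ->.
Qed.

Lemma closed_chain_cycle x s : chain_in x s -> 0 < size s -> last x (map snd s) = x ->
  uniq (belast x (map snd s)) -> is_cycle Es (chain_edges x s).
Proof.
case: s => [|[c y] s] // s_in _ closed s_uniq.
have heads := chain_edges_heads x ((c, y) :: s).
have tails := chain_edges_tails x ((c, y) :: s).
have size_edges : size (chain_edges x ((c, y) :: s)) = (size s).+1.
  by rewrite -(size_map (@ehead n N m)) heads size_map.
split.
- by move: s_in => /chain_inP.
- move=> i; rewrite size_edges => i_lt.
  have := nth_belast_closed x closed; rewrite size_map => /(_ i i_lt) succ_i.
  rewrite -(nth_map _ x (@ehead n N m)) ?size_edges // heads.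
  rewrite -(nth_map _ (VX m x) (@etail n N m)) ?size_edges ?ltn_mod // tails.
  by rewrite (nth_map x) ?size_belast ?size_map ?ltn_mod // succ_i.
- by rewrite tails; apply: NoDup_map_uniq => // a b [].
Qed.

Lemma cycle_closed_chain c : is_cycle Es c ->
  exists x s, [/\ c = chain_edges x s, chain_in x s, 0 < size s & last x (map snd s) = x].
Proof.
case: c => [|e0 c] // [c_in c_succ _].
set x := ehead (last e0 c).
have closed : last x [seq ehead e | e <- e0 :: c] = x by rewrite /x (last_map (@ehead n N m)).
have tails : [seq etail e | e <- e0 :: c] = map (VX m) (belast x [seq ehead e | e <- e0 :: c]).
  apply: (@eq_from_nth _ (etail e0)); first by rewrite !size_map size_belast size_map.
  move=> i; rewrite size_map => i_lt.
  have [j j_lt ->] : exists2 j, j < size (e0 :: c) & i = j.+1 %% size (e0 :: c).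
    case: i i_lt => [|i] i_lt; first by exists (size c); rewrite ?modnn.
    by exists i; rewrite ?modn_small // ltnW.
  have := nth_belast_closed x closed; rewrite size_map => /(_ j j_lt) succ_j.
  rewrite (nth_map e0) ?ltn_mod // -c_succ // (nth_map x) ?size_belast ?size_map ?ltn_mod //.
  by rewrite succ_j (nth_map e0).
exists x, [seq (ecolor e, ehead e) | e <- e0 :: c]; rewrite -chain_edgesK //.
split=> //; first by apply/chain_inP; rewrite -chain_edgesK.
by rewrite -map_comp.
Qed.

Lemma chain_in_loop x s k : chain_in x s -> last x (map snd s) = x ->
  [/\ chain_in x (flatten (nseq k s)), last x (map snd (flatten (nseq k s))) = x
    & size (flatten (nseq k s)) = k * size s].
Proof.
move=> s_in closed; elim: k => [|k [IH_in IH_last IH_size]] //=.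
rewrite map_cat last_cat closed size_cat IH_size mulSn.
by split=> //; apply/chain_in_cat; rewrite closed.
Qed.

Lemma S_disjoint_head (e e' : cedge n m) : S_disjoint Es -> Es e -> Es e' ->
  etail e = etail e' -> ecolor e = ecolor e' -> ehead e = ehead e'.
Proof.
move=> Sd Ee Ee' same_tail same_color; apply/eqP/negPn/negP => /eqP heads_ne.
have e_ne : e <> e' by move=> e_eq; apply: heads_ne; rewrite e_eq.
by have [_ /(_ same_tail)] := Sd _ _ Ee Ee' e_ne.
Qed.

Lemma chain_in_inj x s s' : S_disjoint Es -> chain_in x s -> chain_in x s' ->
  map fst s = map fst s' -> s = s'.
Proof.
move=> Sd; elim: s x s' => [|[c y] s IH] x [|[c' y'] s'] //= [Ee s_in] [Ee' s'_in] [c_eq colors].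
rewrite -c_eq in Ee' *; have y_eq : y = y' := S_disjoint_head Sd Ee Ee' erefl erefl.
by rewrite -y_eq in s'_in *; rewrite (IH y s').
Qed.

Lemma chain_in_repeat_cycle x s : chain_in x s -> ~~ uniq (x :: map snd s) ->
  exists s1 s2,
    [/\ chain_in x s1, 0 < size s2 & is_cycle Es (chain_edges (last x (map snd s1)) s2)].
Proof.
move=> s_in /not_uniq_closed_segment [s1 [s2 [s3 [y [s_eq s1_last s2_gt0 s2_closed s2_uniq]]]]].
move: s_in; rewrite s_eq => /chain_in_cat [s1_in]; rewrite s1_last => /chain_in_cat [s2_in _].
by exists s1, s2; rewrite s1_last; split=> //; apply: closed_chain_cycle.
Qed.

End EdgeChains.

Lemma chain_in_sub n N (m : 'I_N -> nat) (Es Es' : cedge n m -> Prop) x s :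
  (forall e, Es e -> Es' e) -> chain_in Es x s -> chain_in Es' x s.
Proof. by move=> sub /chain_inP s_in; apply/chain_inP=> e /s_in /sub. Qed.

Section Walks.
Variables (R : nzRingType) (n N : nat) (m : 'I_N -> nat).
Variables (A : 'I_N -> 'M[R]_n) (B : forall k : 'I_N, 'M[R]_(n, m k)).

Lemma state_chain_in x s : state_chain A x s <-> chain_in (is_edge A B) x s.
Proof. by elim: s x => [|[c y] s IH] x //=; rewrite IH. Qed.

Definition walk_in (Es : cedge n m -> Prop) (p : iswalk n m) : Prop :=
  Es (IE (w_inp p) (w_first p)) /\ chain_in Es (w_first p) (w_steps p).

Lemma walk_in_valid Vs Es p : subgraph A B Vs Es -> walk_in Es p -> valid_walk A B p.
Proof.
move=> sub [Ein s_in]; split; first by have [] := sub _ Ein.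
by apply/state_chain_in; apply: chain_in_sub s_in => e /sub [].
Qed.

Lemma mem_mdg_path (p : iswalk n m) v : List.In v (mdg_path p) ->
  v = MU n (w_inp p) (map fst (w_steps p)) \/
  exists pre suf, w_steps p = pre ++ suf /\ v = MX m (last (w_first p) (map snd pre)) (map fst suf).
Proof.
case: p => l q f s /= [<-|s_v]; first by left.
right; elim: s f s_v => [|[c y] s IH] f /=.
- by case=> // <-; exists [::], [::].
- case=> [<-|/IH [pre [suf [-> ->]]]]; first by exists [::], ((c, y) :: s).
  by exists ((c, y) :: pre), suf.
Qed.

Lemma cactus_walking_of_family (Xs : {set 'I_n}) (W : 'I_n -> iswalk n m -> Prop) :
  (forall x, x \in Xs -> exists p, W x p) ->
  (forall x p, W x p -> valid_walk A B p /\ whead p = x) ->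
  (forall x x' p p', W x p -> W x' p' -> x <> x' -> vertex_disjoint (mdg_path p) (mdg_path p')) ->
  exists ps, [/\ gen_cactus_walking A B ps, cw_head_is ps Xs &
    forall p, List.In p ps -> W (whead p) p].
Proof.
move=> W_ex W_valid W_disj.
have [ps [heads W_ps]] : exists ps,
    map (@whead n N m) ps = enum Xs /\ forall p, List.In p ps -> W (whead p) p.
  apply: exists_seq_preimage => x; rewrite mem_enum => /W_ex [p Wp].
  by exists p; rewrite (W_valid _ _ Wp).2.
have heads_uniq : uniq (map (@whead n N m) ps) by rewrite heads enum_uniq.
exists ps; split=> //; last first.
  move=> x; rewrite -mem_enum -heads mem_map_In.
  by split=> [[p]|[p]]; exists p.
split=> [p /W_ps /W_valid [] //|ps1 p ps2 p' ps3 ps_eq].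
have ps_p : List.In p ps by rewrite ps_eq; apply: List.in_or_app; right; left.
have ps_p' : List.In p' ps.
  by rewrite ps_eq; apply: List.in_or_app; right; right; apply: List.in_or_app; right; left.
apply: W_disj (W_ps _ ps_p) (W_ps _ ps_p') _ => heads_eq.
move: heads_uniq; rewrite ps_eq map_cat cat_uniq /= map_cat mem_cat inE heads_eq eqxx orbT.
by rewrite !andbF.
Qed.

End Walks.

Section Subgraph.
Variables (R : nzRingType) (n N : nat) (m : 'I_N -> nat).
Variables (A : 'I_N -> 'M[R]_n) (B : forall k : 'I_N, 'M[R]_(n, m k)).
Variables (Vs : vertex n m -> Prop) (Es : cedge n m -> Prop).
Hypotheses (sub : subgraph A B Vs Es) (oi : one_ingoing Vs Es) (Sd : S_disjoint Es).

Lemma chain_in_heads x s z : chain_in Es x s -> z \in map snd s -> Vs (VX m z).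
Proof.
elim: s x => [|[c y] s IH] x //= [Ee s_in]; rewrite in_cons => /orP [/eqP ->|]; last exact: IH s_in.
by have [] := sub Ee.
Qed.

Lemma backward_chain x : Vs (VX m x) -> forall k,
  (exists p, walk_in Es p /\ whead p = x) \/
  (exists y s, [/\ Vs (VX m y), size s = k, chain_in Es y s & last y (map snd s) = x]).
Proof.
move=> Vx; elim=> [|k [walk|[y [s [Vy size_s s_in s_last]]]]].
- by right; exists x, [::].
- by left.
- have [e [[Ee head_e] _]] := oi Vy.
  have [_ V_tail _] := sub Ee.
  case: e Ee head_e V_tail => [c z y'|l q y'] /= Ee head_e V_tail; subst y'.
  + by right; exists z, ((c, y) :: s); rewrite /= size_s.
  + by left; exists (ISWalk q y s).
Qed.

Lemma walk_in_mdg_meet p p' v : walk_in Es p -> walk_in Es p' ->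
  List.In v (mdg_path p) -> List.In v (mdg_path p') -> whead p = whead p'.
Proof.
case: p => l q f s [Ein s_in]; case: p' => l' q' f' s' [Ein' s'_in].
move=> /mem_mdg_path v_p /mem_mdg_path v_p'; rewrite /= in Ein s_in Ein' s'_in.
case: v_p v_p' => [->|[pre [suf [/= s_eq ->]]]] [/= v_eq|[pre' [suf' [/= s'_eq v_eq]]]] //.
- have tails : VU n q = VU n q' := congr1 (fun v => if v is MU _ j _ then VU n j else VX m f) v_eq.
  have colors : l = l' := congr1 (fun v => if v is MU l0 _ _ then l0 else l) v_eq.
  have steps : map fst s = map fst s' := congr1 (fun v => if v is MU _ _ t then t else [::]) v_eq.
  have f_eq : f = f' := S_disjoint_head Sd Ein Ein' tails colors.
  by rewrite /whead /= -f_eq in s'_in *; rewrite (chain_in_inj Sd s_in s'_in steps).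
- case: v_eq => y_eq steps.
  move: s_in s'_in; rewrite s_eq s'_eq => /chain_in_cat [_ suf_in] /chain_in_cat [_].
  rewrite -y_eq => suf'_in; rewrite /whead /= !map_cat !last_cat -y_eq.
  by rewrite (chain_in_inj Sd suf_in suf'_in steps).
Qed.

Lemma stem_cactus_walking Xs : (forall c, ~ is_cycle Es c) -> covers Vs Xs ->
  exists ps, gen_cactus_walking A B ps /\ cw_head_is ps Xs.
Proof.
move=> acyclic cover.
suff [ps [? ? _]] : exists ps, [/\ gen_cactus_walking A B ps, cw_head_is ps Xs &
    forall p, List.In p ps -> walk_in Es p /\ whead p = whead p] by exists ps.
apply: (cactus_walking_of_family (W := fun x p => walk_in Es p /\ whead p = x)).
- move=> x /cover Vx; have [[p walk]|[y [s [_ size_s s_in _]]]] := backward_chain Vx n.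
    by exists p.
  have := ord_seq_not_uniq (s := y :: map snd s); rewrite /= size_map size_s ltnSn.
  by case/(_ isT)/(chain_in_repeat_cycle s_in) => [s1 [s2 [_ _ /acyclic]]].
- by move=> x p [/(walk_in_valid sub)].
- by move=> x x' p p' [Wp <-] [Wp' <-] heads_ne v [/(walk_in_mdg_meet Wp Wp') meet /meet].
Qed.

Section Bud.
Hypotheses (no_input : forall k (q : 'I_(m k)), ~ Vs (VU n q))
  (reach : forall x, Vs (VX m x) -> input_reachable A B x).
Variables (r0 : 'I_n) (cs : seq ('I_N * 'I_n)).
Hypotheses (cs_in : chain_in Es r0 cs) (cs_closed : last r0 (map snd cs) = r0)
  (cs_gt0 : 0 < size cs)
  (cs_unique : forall c, is_cycle Es c -> forall e, List.In e c -> List.In e (chain_edges m r0 cs)).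

Lemma cycle_root : r0 \in map snd cs.
Proof. by move: cs_closed cs_gt0; case: cs => [|[c y] s] //= <- _; rewrite mem_last. Qed.

Lemma cycle_belast y : y \in belast r0 (map snd cs) -> y \in map snd cs.
Proof. by move/mem_belast; rewrite in_cons => /orP [/eqP ->|//]; apply: cycle_root. Qed.

Lemma cycle_step_back c y z : Es (SE m c y z) -> z \in map snd cs -> y \in map snd cs.
Proof.
move=> Ee /split_map_mem [s1 [[c' z'] [s2 [cs_eq /= z'_eq]]]]; subst z'.
have /chain_in_cat [_ [Ee' _]] : chain_in Es r0 (s1 ++ (c', z) :: s2) by rewrite -cs_eq.
have [_ _ Vz] := sub Ee.
have y_eq : y = last r0 (map snd s1).
  have [e [_ e_uniq]] := oi Vz.
  by have := etrans (esym (e_uniq _ (conj Ee erefl))) (e_uniq _ (conj Ee' erefl)); case.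
have := mem_last r0 (map snd s1); rewrite -y_eq in_cons => /orP [/eqP ->|]; first exact: cycle_root.
by rewrite cs_eq map_cat mem_cat => ->.
Qed.

Lemma cycle_chain_back y s : chain_in Es y s -> last y (map snd s) \in map snd cs ->
  y \in map snd cs.
Proof.
elim: s y => [|[c z] s IH] y //= [Ee s_in] /(IH _ s_in).
exact: cycle_step_back Ee.
Qed.

Lemma long_chain_start_on_cycle y s : chain_in Es y s -> n <= size s -> y \in map snd cs.
Proof.
move=> s_in n_le; have : ~~ uniq (y :: map snd s).
  by apply: ord_seq_not_uniq; rewrite /= size_map ltnS.
case/(chain_in_repeat_cycle s_in) => s1 [s2 [s1_in s2_gt0 cyc]].
case: s2 s2_gt0 cyc => [|[c z] s2] // _ cyc.
have := cs_unique cyc (or_introl erefl) => /chain_edges_tail_mem [v v_cyc [/= v_eq]].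
by apply: (cycle_chain_back s1_in); rewrite v_eq; apply: cycle_belast.
Qed.

Lemma chain_from_cycle x : Vs (VX m x) ->
  exists y s, [/\ y \in map snd cs, chain_in Es y s, last y (map snd s) = x & size s = n].
Proof.
move=> Vx; have [[p [[Ein _] _]]|[y [s [_ size_s s_in s_last]]]] := backward_chain Vx n.
  by have [_ /no_input] := sub Ein.
by exists y, s; split=> //; apply: (long_chain_start_on_cycle s_in); rewrite size_s.
Qed.

Lemma cycle_rotation a : a \in map snd cs -> exists la, [/\ chain_in Es a la,
  last a (map snd la) = a, size la = size cs & perm_eq (map snd la) (map snd cs)].
Proof.
case/split_map_mem=> s1 [[c a'] [s2 [cs_eq /= a'_eq]]]; subst a'.
move: cs_in cs_closed; rewrite cs_eq => /chain_in_cat [s1_in [Ee s2_in]].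
rewrite map_cat last_cat /= => s2_last.
exists (s2 ++ rcons s1 (c, a)); split.
- apply/chain_in_cat; rewrite s2_last -cats1; split=> //.
  by apply/chain_in_cat; split.
- by rewrite map_cat last_cat s2_last map_rcons last_rcons.
- by rewrite !size_cat size_rcons /= !addnS addnC.
- by rewrite !map_cat map_rcons /= -cat_rcons perm_catC.
Qed.

Lemma cycle_path a b : a \in map snd cs -> b \in map snd cs ->
  exists t, [/\ chain_in Es a t, last a (map snd t) = b & size t <= size cs].
Proof.
move=> cyc_a; have [la [la_in _ la_size la_perm]] := cycle_rotation cyc_a.
rewrite -(perm_mem la_perm) => /split_map_mem [t1 [[c b'] [t2 [la_eq /= b'_eq]]]]; subst b'.
move: la_in; rewrite la_eq -cat_rcons => /chain_in_cat [t_in _].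
exists (rcons t1 (c, b)); split=> //; first by rewrite map_rcons last_rcons.
by rewrite -la_size la_eq -cat_rcons size_cat leq_addr.
Qed.

Lemma first_walk_to_cycle : exists p, [/\ valid_walk A B p, whead p \in map snd cs &
  forall y, y \in belast (w_first p) (map snd (w_steps p)) -> y \notin map snd cs].
Proof.
have [[l q f s] [[B_in s_chain] /= r0_head]] := reach (chain_in_heads cs_in cycle_root).
set vs := f :: map snd s; set i := find (mem (map snd cs)) vs.
have i_lt : i < size vs.
  rewrite -has_find; apply/hasP; exists r0; last exact: cycle_root.
  by rewrite /vs -r0_head mem_last.
have [belast_eq last_eq] : belast f (map snd (take i s)) = take i vs /\
    last f (map snd (take i s)) = nth f vs i.
  have : f :: map snd (take i s) = take i.+1 vs by rewrite /vs map_take.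
  by rewrite lastI (take_nth f i_lt) => /rcons_inj [-> ->].
exists (ISWalk q f (take i s)); split.
- split=> //; have /chain_in_cat [s_take _] : chain_in (is_edge A B) f (take i s ++ drop i s).
    by rewrite cat_take_drop; apply/(state_chain_in A B).
  exact/(state_chain_in A B).
- by rewrite /whead /= last_eq; apply: nth_find; rewrite has_find.
- move=> y /=; rewrite belast_eq => y_take; apply/negP => y_cyc.
  have : has (mem (map snd cs)) (take i vs) by apply/hasP; exists y.
  by rewrite has_take_leq ?ltnn // ltnW.
Qed.

Section Padding.
Variables (p0 : iswalk n m) (M : nat).
Hypotheses (p0_valid : valid_walk A B p0) (p0_head : whead p0 \in map snd cs)
  (p0_first : forall y, y \in belast (w_first p0) (map snd (w_steps p0)) -> y \notin map snd cs).

Definition pad_walk Q := ISWalk (w_inp p0) (w_first p0) (w_steps p0 ++ Q).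

(* Winding [winding x] times around the cycle separates the lengths of walks to distinct
   targets by more than [size (w_steps p0)], see [pad_length_gap]. *)
Definition winding (x : nat) := (size cs + n + size (w_steps p0)).+1 * x + n + M.

Definition pad_length (x : nat) := size cs * winding x.

Definition padded (x : 'I_n) (p : iswalk n m) := exists Q, [/\ p = pad_walk Q,
  chain_in Es (whead p0) Q, last (whead p0) (map snd Q) = x &
  pad_length x <= size Q <= pad_length x + size cs + n].

Lemma pad_length_gap x x' : x < x' ->
  pad_length x + size cs + n + size (w_steps p0) < pad_length x'.
Proof.
rewrite /pad_length /winding => x_lt.
set D := (size cs + n + size (w_steps p0)).+1.
have D_gt : size cs + n + size (w_steps p0) < D by []; clearbody D.
have : D * x.+1 <= D * x' by rewrite leq_mul2l x_lt orbT.
rewrite mulnS => /(leq_mul (leqnn (size cs))).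
have := leq_pmull D cs_gt0; rewrite !mulnDr; lia.
Qed.

Lemma padded_exists x : Vs (VX m x) -> exists p, padded x p.
Proof.
move=> Vx; have [y [s [y_cyc s_in s_last s_size]]] := chain_from_cycle Vx.
have [t [t_in t_last t_size]] := cycle_path p0_head y_cyc.
have [la [la_in la_last la_size _]] := cycle_rotation p0_head.
have [loop_in loop_last loop_size] := chain_in_loop (winding x) la_in la_last.
set Q := flatten (nseq (winding x) la) ++ t ++ s.
exists (pad_walk Q), Q; split=> //.
- apply/chain_in_cat; rewrite loop_last; split=> //.
  by apply/chain_in_cat; rewrite t_last.
- by rewrite !map_cat !last_cat loop_last t_last.
- by rewrite !size_cat loop_size la_size s_size /pad_length mulnC; lia.
Qed.

Lemma padded_valid x p : padded x p -> valid_walk A B p /\ whead p = x.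
Proof.
case=> Q [-> Q_in Q_last _]; case: p0_valid => B_in p0_chain; split; first split=> //.
- apply/(state_chain_in A B)/chain_in_cat; split; first exact/(state_chain_in A B).
  by apply: chain_in_sub Q_in => e /sub [].
- by rewrite /whead /= map_cat last_cat.
Qed.

Lemma padded_long x p : padded x p -> M <= wlength p.
Proof.
case=> Q [-> _ _ /andP [Q_ge _]]; rewrite /wlength /= size_cat.
by move: Q_ge; rewrite /pad_length /winding; nia.
Qed.

Lemma padded_meet Q Q' v : chain_in Es (whead p0) Q -> chain_in Es (whead p0) Q' ->
  n <= size Q -> size Q + size (w_steps p0) < size Q' ->
  List.In v (mdg_path (pad_walk Q)) -> List.In v (mdg_path (pad_walk Q')) ->
  last (whead p0) (map snd Q) = last (whead p0) (map snd Q').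
Proof.
move=> Q_in Q'_in n_le Q_lt /mem_mdg_path v_p /mem_mdg_path v_p'.
case: v_p v_p' => [->|[pre [suf [/= s_eq ->]]]] [/= v_eq|[pre' [suf' [/= s'_eq v_eq]]]] //.
  have := congr1 (fun v => if v is MU _ _ t then size t else 0) v_eq.
  by rewrite /= !size_map !size_cat; lia.
case: v_eq => y_eq colors.
have suf_size : size suf = size suf' by rewrite -(size_map fst suf) colors size_map.
have [[q' [pre'_eq Q'_eq]]|[q' [_ _ suf'_eq]]] := cat_eq_cat s'_eq; last first.
  by have := congr1 size s_eq; have := congr1 size suf'_eq; rewrite !size_cat; lia.
set y := last (w_first p0) (map snd pre').
have y_q' : last (whead p0) (map snd q') = y by rewrite /y pre'_eq map_cat last_cat.
have /chain_in_cat [_] : chain_in Es (whead p0) (q' ++ suf') by rewrite -Q'_eq.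
rewrite y_q' => suf'_in.
have [[q [pre_eq Q_eq]]|[q [q_gt0 stP_eq suf_eq]]] := cat_eq_cat s_eq.
- have y_q : last (whead p0) (map snd q) = y by rewrite /y -y_eq pre_eq map_cat last_cat.
  have /chain_in_cat [_] : chain_in Es (whead p0) (q ++ suf) by rewrite -Q_eq.
  rewrite y_q => suf_in.
  rewrite Q_eq Q'_eq !map_cat !last_cat y_q y_q'.
  by rewrite (chain_in_inj Sd suf_in suf'_in colors).
- have y_cyc : y \in map snd cs.
    apply: (long_chain_start_on_cycle suf'_in).
    by rewrite -suf_size suf_eq size_cat; lia.
  have y_belast : y \in belast (w_first p0) (map snd (w_steps p0)).
    by rewrite /y -y_eq stP_eq map_cat last_in_belast // size_map.
  by have := p0_first y_belast; rewrite y_cyc.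
Qed.

Lemma padded_disjoint x x' p p' : padded x p -> padded x' p' -> x <> x' ->
  vertex_disjoint (mdg_path p) (mdg_path p').
Proof.
wlog x_lt : x x' p p' / x < x'.
  move=> hyp Wp Wp' x_ne; case: (ltngtP x x') => [x_lt|x_gt|/val_inj //].
    exact: hyp x_lt Wp Wp' x_ne.
  by move=> v [v_p v_p']; apply: (hyp _ _ _ _ x_gt Wp' Wp (nesym x_ne) v).
case=> Q [-> Q_in Q_last /andP [Q_ge Q_le]] [Q' [-> Q'_in Q'_last /andP [Q'_ge _]]].
move=> x_ne v [v_p v_p'].
apply: x_ne; rewrite -Q_last -Q'_last; apply: padded_meet v_p v_p' => //.
- by move: Q_ge; rewrite /pad_length /winding; nia.
- by have := pad_length_gap x_lt; lia.
Qed.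

Lemma padded_cactus_walking Xs : covers Vs Xs -> exists ps, [/\ gen_cactus_walking A B ps,
  cw_head_is ps Xs & forall p, List.In p ps -> M <= wlength p].
Proof.
move=> cover; have [ps [cw heads ps_padded]] := cactus_walking_of_family
  (fun x x_in => padded_exists (cover x x_in)) padded_valid padded_disjoint.
by exists ps; split=> // p /ps_padded /padded_long.
Qed.

End Padding.

Lemma bud_cactus_walking Xs M : covers Vs Xs -> exists ps, [/\ gen_cactus_walking A B ps,
  cw_head_is ps Xs & forall p, List.In p ps -> M <= wlength p].
Proof.
have [p0 [p0_valid p0_head p0_first]] := first_walk_to_cycle.
exact: padded_cactus_walking p0 M p0_valid p0_head p0_first Xs.
Qed.

End Bud.

End Subgraph.

Theorem proposition2 (R : nzRingType) (n N : nat) (m : 'I_N -> nat)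
    (A : 'I_N -> 'M[R]_n) (B : forall k : 'I_N, 'M[R]_(n, m k))
    (Xs : {set 'I_n}) :
  ((exists (Vs : vertex n m -> Prop) (Es : cedge n m -> Prop),
       gen_stem A B Vs Es /\ covers Vs Xs) ->
     exists ps : seq (iswalk n m),
       gen_cactus_walking A B ps /\ cw_head_is ps Xs)
  /\
  ((exists (Vs : vertex n m -> Prop) (Es : cedge n m -> Prop),
       gen_bud A B Vs Es /\ covers Vs Xs) ->
     (exists ps : seq (iswalk n m),
        gen_cactus_walking A B ps /\ cw_head_is ps Xs) /\
     forall M : nat, exists ps : seq (iswalk n m),
       [/\ gen_cactus_walking A B ps, cw_head_is ps Xs &
           forall p, List.In p ps -> (M <= wlength p)%N]).
Proof.
split.
- move=> [Vs [Es [[sub _ acyclic oi Sd] cover]]].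
  exact: stem_cactus_walking sub oi Sd Xs acyclic cover.
- move=> [Vs [Es [[sub [no_input [c [c_cycle c_unique]] reach oi Sd]] cover]]].
  have [r0 [cs [c_eq cs_in cs_gt0 cs_closed]]] := cycle_closed_chain c_cycle.
  have cs_unique c' : is_cycle Es c' -> forall e, List.In e c' -> List.In e (chain_edges m r0 cs).
    by move=> c'_cycle e /(c_unique c' c'_cycle e); rewrite c_eq.
  have bud M :=
    bud_cactus_walking sub oi Sd no_input reach cs_in cs_closed cs_gt0 cs_unique M cover.
  split=> [|M]; last exact: bud.
  by have [ps [? ? _]] := bud 0; exists ps.
Qed.
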